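(* Let $q=2^m$, let $k\in\mathbb{F}_q$ with $Tr(k)=1$, let $i\in\mathbb{F}_{q^2}\setminus\mathbb{F}_q$ with $i^2=i+k$, and let $\alpha=A+iB$, $\beta=C+iD$ with $A,B,C,D\in\mathbb{F}_q$ and $\alpha\beta\neq 0$. Then the following are equivalent: (i) $A=\xi^2+\xi$, $B=D=0$, $C=\xi^2$ for some $\xi\in\mathbb{F}_q\setminus\{0,1\}$ with $Tr(\xi/(\xi+1))=0$; (ii) $\beta(1+\alpha^{q+1}+\beta^{q+1})+\alpha^{2q}=0$, $\beta^{q+1}\neq 1$, $Tr\left(\frac{\beta^{q+1}}{\alpha^{q+1}}\right)=0$, and $\beta\in\mathbb{F}_q$.
   Context: $Tr:\mathbb{F}_q\to\mathbb{F}_2$ is the absolute trace $Tr(z)=z+z^2+\cdots+z^{2^{m-1}}$. *)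

From HB Require Import structures.
From mathcomp Require Import all_boot all_order all_algebra all_field.
Set Implicit Arguments. Unset Strict Implicit. Unset Printing Implicit Defensive.
Import GRing.Theory.
Local Open Scope ring_scope.

(* L plays the role of F_{q^2}, q = 2^m; F_q is the subfield {x | x^q = x}. *)

Definition inFq (L : finFieldType) (m : nat) (x : L) : bool := x ^+ (2 ^ m) == x.

Definition Tr (L : finFieldType) (m : nat) (z : L) : L := \sum_(j < m) z ^+ (2 ^ j).

(* For x, y in F_q one has
   (x + iy)^q = (x + y) + iy, because i^q is the other root i + 1 of X^2 + X + k;
   hence x + iy lies in F_q exactly when y = 0.  Assuming (ii), the equation gives
   alpha^(2q) = beta (1 + alpha^(q+1) + beta^2) in F_q, so alpha^2 and then alpha
   lie in F_q.  With alpha = A and beta = C = xi^2 the equation factors in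
   characteristic 2 as (1 + xi)^2 (A + xi^2 + xi)^2 = 0, which forces
   A = xi^2 + xi, and then C^2 / A^2 = (xi / (xi + 1))^2 has the same trace as
   xi / (xi + 1). *)

From HB Require Import structures.
From mathcomp Require Import all_boot all_order all_algebra all_field.
From mathcomp Require Import ring.
Set Implicit Arguments. Unset Strict Implicit.
Import GRing.Theory.
Local Open Scope ring_scope.

Section CharTwo.

Variable L : fieldType.
Hypothesis pchar2 : 2%N \in [pchar L].

Lemma addr_eq0_pchar2 (x y : L) : (x + y == 0) = (x == y).
Proof. by rewrite -[RHS]subr_eq0 (oppr_pchar2 pchar2). Qed.

Lemma exprD_2n n (x y : L) : (x + y) ^+ (2 ^ n) = x ^+ (2 ^ n) + y ^+ (2 ^ n).
Proof. by apply: exprDn_pchar; rewrite pnatX (pnatE _ (isT : prime 2)) pchar2. Qed.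

Lemma exprD2_pchar2 (x y : L) : (x + y) ^+ 2 = x ^+ 2 + y ^+ 2.
Proof. exact: (exprD_2n 1). Qed.

Lemma expr_2n_inj n : injective (fun x : L => x ^+ (2 ^ n)).
Proof.
move=> x y /eqP; rewrite -addr_eq0_pchar2 -exprD_2n expf_eq0 addr_eq0_pchar2.
by case/andP=> _ /eqP.
Qed.

Lemma sqr_divDl (x : L) : x ^+ 2 / (x ^+ 2 + x) = x / (x + 1).
Proof.
have [-> | x0] := eqVneq x 0; first by rewrite expr0n !mul0r.
have -> : x ^+ 2 + x = x * (x + 1) by rewrite mulrDr mulr1 expr2.
by rewrite expr2 invfM mulrA mulfK.
Qed.

Lemma scalar_eqn_factor (xi A : L) :
  xi ^+ 2 * (1 + A ^+ 2 + (xi ^+ 2) ^+ 2) + A ^+ 2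
  = (1 + xi) ^+ 2 * (A + xi ^+ 2 + xi) ^+ 2.
Proof.
rewrite !exprD2_pchar2 expr1n.
have -> : (1 + xi ^+ 2) * (A ^+ 2 + (xi ^+ 2) ^+ 2 + xi ^+ 2)
  = xi ^+ 2 * (1 + A ^+ 2 + (xi ^+ 2) ^+ 2) + A ^+ 2 + 2%:R * (xi ^+ 2) ^+ 2 by ring.
by rewrite (pcharf0 pchar2) mul0r addr0.
Qed.

Lemma scalar_eqn_eq0 (xi A : L) : xi != 1 ->
  (xi ^+ 2 * (1 + A ^+ 2 + (xi ^+ 2) ^+ 2) + A ^+ 2 == 0) = (A == xi ^+ 2 + xi).
Proof.
move=> xi1; rewrite scalar_eqn_factor mulf_eq0 !sqrf_eq0.
by rewrite addr_eq0_pchar2 eq_sym (negbTE xi1) -addrA addr_eq0_pchar2.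
Qed.

End CharTwo.

Arguments expr_2n_inj {L} pchar2 n [x1 x2].

Section Subfield.

Variables (L : finFieldType) (m : nat).
Hypothesis pchar2 : 2%N \in [pchar L].
Hypothesis cardL : #|L| = (2 ^ m * 2 ^ m)%N.

Local Notation q := (2 ^ m)%N.
Local Notation inFq := (inFq m).
Local Notation Tr := (Tr m).

Lemma inFqE (x : L) : inFq x -> x ^+ q = x.
Proof. by move/eqP. Qed.

Lemma inFq1 : inFq (1 : L).
Proof. by rewrite /inFq expr1n. Qed.

Lemma inFqD (x y : L) : inFq x -> inFq y -> inFq (x + y).
Proof. by rewrite /inFq exprD_2n // => /eqP -> /eqP ->. Qed.

Lemma inFqM (x y : L) : inFq x -> inFq y -> inFq (x * y).
Proof. by rewrite /inFq exprMn => /eqP -> /eqP ->. Qed.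

Lemma inFqV (x : L) : inFq x -> inFq x^-1.
Proof. by rewrite /inFq exprVn => /eqP ->. Qed.

Lemma inFq_expr2n n (x : L) : inFq (x ^+ (2 ^ n)) = inFq x.
Proof. by rewrite /inFq exprAC (inj_eq (expr_2n_inj pchar2 n)). Qed.

Lemma frobK (x : L) : (x ^+ q) ^+ q = x.
Proof. by rewrite -exprM -cardL expf_card. Qed.

Lemma inFq_norm (x : L) : inFq (x ^+ q.+1).
Proof. by rewrite /inFq exprS exprMn frobK mulrC. Qed.

Lemma norm_inFq (x : L) : inFq x -> x ^+ q.+1 = x ^+ 2.
Proof. by move=> Fx; rewrite exprS (inFqE Fx) expr2. Qed.

Lemma expr2Sm_inFq (x : L) : inFq x -> x ^+ (2 ^ m.+1) = x ^+ 2.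
Proof. by move=> Fx; rewrite expnSr exprM (inFqE Fx). Qed.

Lemma sqrt_inFq (x : L) : inFq x -> exists2 y, inFq y & y ^+ 2 = x.
Proof.
have [sqrt _ sqrtK] := injF_bij (expr_2n_inj pchar2 1).
have sqrtE : sqrt x ^+ 2 = x by exact: sqrtK.
by move=> Fx; exists (sqrt x); rewrite // -(inFq_expr2n 1) sqrtE.
Qed.

Lemma Tr_sqr (w : L) : inFq w -> Tr (w ^+ 2) = Tr w.
Proof.
rewrite /Tr /inFq; case: m => [|n] /eqP Fw; first by rewrite !big_ord0.
rewrite big_ord_recr big_ord_recl /= expr1 addrC -exprM -expnS Fw.
by congr (_ + _); apply: eq_bigr => j _; rewrite -exprM -expnS.
Qed.

Lemma Tr_sqr_ratio (xi : L) : inFq xi ->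
  Tr ((xi ^+ 2) ^+ 2 / (xi ^+ 2 + xi) ^+ 2) = Tr (xi / (xi + 1)).
Proof.
move=> Fxi; rewrite -expr_div_n sqr_divDl Tr_sqr //.
by rewrite inFqM ?inFqV ?inFqD ?inFq1.
Qed.

Variables k i : L.
Hypotheses (Fk : inFq k) (Fi : ~~ inFq i) (i_root : i ^+ 2 = i + k).

Lemma frob_i : i ^+ q = i + 1.
Proof.
set j := i ^+ q.
have j_root : j ^+ 2 = j + k by rewrite exprAC i_root exprD_2n // (inFqE Fk).
have : (j + i) * (j + i + 1) == 0.
  rewrite mulrDr mulr1 -expr2 exprD2_pchar2 // j_root i_root.
  have -> : j + k + (i + k) + (j + i) = (j + j) + (k + k) + (i + i) by ring.
  by rewrite !addrr_pchar2 // !addr0.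
rewrite mulf_eq0 addr_eq0_pchar2 // -addrA addr_eq0_pchar2 //.
by case/orP=> /eqP // ji; move: Fi; rewrite /inFq -/j ji eqxx.
Qed.

Lemma frob_coord (x y : L) : inFq x -> inFq y ->
  (x + i * y) ^+ q = x + y + i * y.
Proof.
move=> Fx Fy; rewrite exprD_2n // exprMn frob_i (inFqE Fx) (inFqE Fy).
by rewrite mulrDl mul1r addrA addrAC.
Qed.

Lemma inFq_coord (x y : L) : inFq x -> inFq y -> inFq (x + i * y) = (y == 0).
Proof.
move=> Fx Fy; rewrite /inFq frob_coord // addrAC.
by rewrite -[X in _ == X]addr0 (inj_eq (addrI _)).
Qed.

End Subfield.

Theorem proposition2 (L : finFieldType) (m : nat)
  (hchar : 2%N \in [pchar L]) (hcard : #|L| = (2 ^ m * 2 ^ m)%N)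
  (k i A B C D : L)
  (hk : inFq m k) (trk : Tr m k = 1)
  (hiFq : ~~ inFq m i) (hi2 : i ^+ 2 = i + k)
  (hA : inFq m A) (hB : inFq m B) (hC : inFq m C) (hD : inFq m D) :
  let q := (2 ^ m)%N in
  let alpha := A + i * B in
  let beta := C + i * D in
  alpha * beta != 0 ->
  ((exists xi : L, [/\ inFq m xi, xi != 0, xi != 1 & Tr m (xi / (xi + 1)) = 0]
                   /\ [/\ A = xi ^+ 2 + xi, B = 0, D = 0 & C = xi ^+ 2])
   <->
   [/\ beta * (1 + alpha ^+ q.+1 + beta ^+ q.+1) + alpha ^+ (2 * q) = 0,
       beta ^+ q.+1 != 1,
       Tr m (beta ^+ q.+1 / alpha ^+ q.+1) = 0
     & inFq m beta]).
Proof.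
move=> q alpha beta ab0.
have Fcoord := inFq_coord hchar hk hiFq hi2.
have -> : (2 * q)%N = (2 ^ m.+1)%N by rewrite expnS.
split.
  case=> xi [[Fxi xi0 xi1 Trxi] [eA eB eD eC]].
  have -> : alpha = A by rewrite /alpha eB mulr0 addr0.
  have -> : beta = C by rewrite /beta eD mulr0 addr0.
  rewrite (norm_inFq hA) (norm_inFq hC) (expr2Sm_inFq hA); split => //.
  - by apply/eqP; rewrite eC scalar_eqn_eq0 // eA.
  - apply: contra xi1 => /eqP xi4; apply/eqP/(expr_2n_inj hchar 2).
    by rewrite expr1n -xi4 eC -exprM.
  - by rewrite eC eA Tr_sqr_ratio.
case=> eqn Nb1 Trb Fb.
have eD : D = 0 by apply/eqP; rewrite -(Fcoord _ _ hC hD).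
have ebeta : beta = C by rewrite /beta eD mulr0 addr0.
rewrite ebeta (norm_inFq hC) in eqn Nb1 Trb.
have Fa : inFq m alpha.
  rewrite -(inFq_expr2n _ hchar m.+1); move/eqP: eqn.
  rewrite addrC addr_eq0_pchar2 // => /eqP ->.
  by rewrite inFqM ?inFqD ?inFq1 ?(inFq_norm hcard) ?(inFq_expr2n _ hchar 1).
have eB : B = 0 by apply/eqP; rewrite -(Fcoord _ _ hA hB).
have ealpha : alpha = A by rewrite /alpha eB mulr0 addr0.
rewrite ealpha (norm_inFq hA) in eqn Trb; rewrite (expr2Sm_inFq hA) in eqn.
have [xi Fxi eC] := sqrt_inFq hchar hC.
have xi1 : xi != 1 by apply: contraNneq Nb1 => xi1; rewrite -eC xi1 !expr1n.
have eA : A = xi ^+ 2 + xi by apply/eqP; rewrite -scalar_eqn_eq0 // eC eqn.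
exists xi; split; split => //.
- by apply: contraNneq ab0 => xi0; rewrite ebeta -eC xi0 expr0n mulr0.
- by rewrite -Tr_sqr_ratio // -eA eC.
Qed.
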